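(* Let $N$ be a simply connected nilpotent Lie group with Lie algebra $\mathcal{N}$, and let $\mathfrak{z}$ be the center of $\mathcal{N}$. Let $F$ be an abstract group automorphism of $N$ and $f=\exp^{-1}\circ F\circ\exp$. Then $F$ is a central automorphism (i.e. $x^{-1}F(x)$ lies in the center $Z$ of $N$ for all $x\in N$) if and only if $f(x)-x\in\mathfrak{z}$ for all $x\in\mathcal{N}$.
   Context: $\exp:\mathcal{N}\to N$ is a diffeomorphism with $\exp(\mathfrak{z})=Z$; the map $f$ is a Lie ring automorphism (additive, bracket-preserving, bijective). *)

From HB Require Import structures.
From mathcomp Require Import all_boot all_order all_algebra.
From mathcomp Require Import reals.
Set Implicit Arguments. Unset Strict Implicit. Unset Printing Implicit Defensive.
Import Order.TTheory GRing.Theory Num.Theory.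
Local Open Scope ring_scope.

Section LieDefs.
Variables (R : realType) (L : vectType R) (br : L -> L -> L).

Definition is_lie_bracket : Prop :=
  [/\ (forall (a : R) (x y z : L), br (a *: x + y) z = a *: br x z + br y z),
      (forall (a : R) (x y z : L), br z (a *: x + y) = a *: br z x + br z y),
      (forall x : L, br x x = 0) &
      (forall x y z : L, br x (br y z) + br y (br z x) + br z (br x y) = 0)].

Fixpoint nest (w : seq L) : L :=
  match w with
  | [::] => 0
  | [:: a] => a
  | a :: w' => br a (nest w')
  end.

Definition nilpotent_step (s : nat) : Prop :=
  forall w : seq L, size w = s.+1 -> nest w = 0.

(* Dynkin's form of the Baker-Campbell-Hausdorff series, truncated at
   degree s (exact when the Lie algebra is nilpotent of step <= s). *)
Definition bch (s : nat) (x y : L) : L :=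
  \sum_(1 <= n < s.+1)
    \sum_(t : {ffun 'I_n -> 'I_s.+1 * 'I_s.+1} |
            [forall i, 0 < ((t i).1 : nat) + (t i).2]%N)
      ((((-1) ^+ n.-1) / n%:R)
        / ((\sum_i (((t i).1 : nat) + (t i).2))%N%:R
           * (\prod_i (((t i).1)`! * ((t i).2)`!))%N%:R)) *:
      nest (flatten [seq nseq (t i).1 x ++ nseq (t i).2 y | i <- enum 'I_n]).

Definition lie_center (x : L) : Prop := forall y : L, br x y = 0.

End LieDefs.

Section GroupDefs.
Variables (N : Type) (mul : N -> N -> N) (one : N) (inv : N -> N).

Definition is_group : Prop :=
  [/\ (forall a b c, mul a (mul b c) = mul (mul a b) c),
      (forall a, mul one a = a), (forall a, mul a one = a),
      (forall a, mul (inv a) a = one) & (forall a, mul a (inv a) = one)].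

Definition group_center (g : N) : Prop := forall h : N, mul g h = mul h g.

Definition is_group_automorphism (F : N -> N) : Prop :=
  (forall a b, F (mul a b) = mul (F a) (F b)) /\ bijective F.

End GroupDefs.

(* Through exp, the product of N is the BCH product:
   bch x y = x + y + [x, y]/2 + (brackets of degree >= 3 in x and y).
   If [x, c] = 0, every bracket of degree >= 2 in x and c vanishes, so
   exp (x + c) = exp x * exp c; hence exp c is central in N whenever c is
   central in the Lie algebra.  Conversely, if exp c is central then
   bch c y = bch y c, and subtracting the two expansions gives
   [c, y] = (brackets of degree >= 3 in c and y): whenever [c, y] lies in a term
   of the lower central series it lies in the next one, so [c, y] = 0 by
   nilpotency.  With this, F (exp x) = exp x * exp c for a central c exactly
   when f x = x + c. *)
From HB Require Import structures.
From mathcomp Require Import all_boot all_order all_algebra.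
From mathcomp Require Import reals.
From mathcomp Require Import zify.
Import GRing.Theory Num.Theory.
Local Open Scope ring_scope.
Set Implicit Arguments. Unset Strict Implicit. Unset Printing Implicit Defensive.

Section LieAlgebra.
Variables (R : realType) (L : vectType R) (br : L -> L -> L).
Hypothesis br_lie : is_lie_bracket br.

Lemma brDl x y z : br (x + y) z = br x z + br y z.
Proof. by case: br_lie => brl _ _ _; have := brl 1 x y z; rewrite !scale1r. Qed.

Lemma brDr x y z : br z (x + y) = br z x + br z y.
Proof. by case: br_lie => _ brr _ _; have := brr 1 x y z; rewrite !scale1r. Qed.

Lemma br0r z : br z 0 = 0.
Proof. by apply: (addrI (br z 0)); rewrite -brDr !addr0. Qed.

Lemma brZr (a : R) x z : br z (a *: x) = a *: br z x.
Proof.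
by case: br_lie => _ brr _ _; have := brr a x 0 z; rewrite !addr0 br0r addr0.
Qed.

Lemma brxx x : br x x = 0.
Proof. by case: br_lie. Qed.

Lemma br_anticomm x y : br y x = - br x y.
Proof.
apply/eqP; rewrite -addr_eq0 addrC; apply/eqP.
by have := brxx (x + y); rewrite brDl !brDr !brxx add0r addr0.
Qed.

Lemma nest_rcons p v : nest br (rcons p v) = foldr br v p.
Proof. by elim: p => [//|a p /= <-]; case: p. Qed.

Lemma foldr_brD p u v : foldr br (u + v) p = foldr br u p + foldr br v p.
Proof. by elim: p => [//|a p /= ->]; rewrite brDr. Qed.

Lemma foldr_brZ p (a : R) v : foldr br (a *: v) p = a *: foldr br v p.
Proof. by elim: p => [//|b p /= ->]; rewrite brZr. Qed.

Lemma foldr_br0 p : foldr br 0 p = 0.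
Proof. by elim: p => [//|a p /= ->]; rewrite br0r. Qed.

(* [lower_central k] is the subspace gamma_(k+1) spanned by the brackets
   [a_1, [a_2, ..., [a_k, v]]]; in particular [lower_central 0] is all of L. *)
Inductive lower_central : nat -> L -> Prop :=
| lower_central0 v : lower_central 0 v
| lower_central_br k a v : lower_central k v -> lower_central k.+1 (br a v)
| lower_central_zero k : lower_central k 0
| lower_central_add k u v :
    lower_central k u -> lower_central k v -> lower_central k (u + v)
| lower_central_scale k (a : R) v :
    lower_central k v -> lower_central k (a *: v).

Lemma lower_central_le j k v :
  (j <= k)%N -> lower_central k v -> lower_central j v.
Proof.
move=> le_jk lc_v; elim: lc_v j le_jk => {k v}
  [v|k a v _ IH|k|k u v _ IHu _ IHv|k a v _ IH] [|j] //= le_jk;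
  by constructor; auto.
Qed.

Lemma lower_central_sum k (I : Type) (r : seq I) (P : pred I) (G : I -> L) :
  (forall i, P i -> lower_central k (G i)) ->
  lower_central k (\sum_(i <- r | P i) G i).
Proof.
move=> lcG; apply: big_ind => //.
  exact: lower_central_zero.
exact: lower_central_add.
Qed.

Lemma lower_central_br_anticomm k x y :
  lower_central k (br x y) -> lower_central k (br y x).
Proof. by rewrite (br_anticomm x y) -scaleN1r; apply: lower_central_scale. Qed.

Lemma nest_pred2_ind x y (P : nat -> L -> Prop) :
  P 2%N 0 -> P 2%N (br x y) -> P 2%N (- br x y) ->
  (forall n a v, (2 <= n)%N -> P n v -> P n.+1 (br a v)) ->
  forall w, all (pred2 x y) w -> (2 <= size w)%N -> P (size w) (nest br w).
Proof.
move=> P0 Pxy Pyx Pbr; elim=> [//|a [//|b w] IH] /= /andP[wa ww] _.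
case: w IH ww => [|d w] IH ww; last by apply: Pbr => //; apply: IH.
move: wa ww => /= /orP[]/eqP-> /andP[/orP[]/eqP-> _];
  by rewrite ?brxx // br_anticomm.
Qed.

Lemma nest_pred2_eq0 x y w : br x y = 0 ->
  all (pred2 x y) w -> (2 <= size w)%N -> nest br w = 0.
Proof.
move=> xy0; apply: (nest_pred2_ind (P := fun _ v => v = 0));
  rewrite ?xy0 ?oppr0 //.
by move=> n a v _ ->; rewrite br0r.
Qed.

Lemma nest_pred2_lower_central k x y w : lower_central k (br x y) ->
  all (pred2 x y) w -> (2 <= size w)%N ->
  lower_central (k + size w - 2) (nest br w).
Proof.
move=> lc_xy.
apply: (nest_pred2_ind (P := fun n => lower_central (k + n - 2)));
  rewrite ?addnK //.
- exact: lower_central_zero.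
- by rewrite -scaleN1r; apply: lower_central_scale.
- move=> n a v le2n lc_v; have -> : (k + n.+1 - 2 = (k + n - 2).+1)%N by lia.
  exact: lower_central_br.
Qed.

Section BCHExpansion.
Variable s : nat.

Definition bch_index n := {ffun 'I_n -> 'I_s.+1 * 'I_s.+1}.

Definition bch_admissible n (t : bch_index n) : bool :=
  [forall i, 0 < ((t i).1 : nat) + (t i).2]%N.

Definition bch_degree n (t : bch_index n) : nat :=
  (\sum_i (((t i).1 : nat) + (t i).2))%N.

Definition bch_coef n (t : bch_index n) : R :=
  (((-1) ^+ n.-1) / n%:R)
    / ((bch_degree t)%:R * (\prod_i (((t i).1)`! * ((t i).2)`!))%N%:R).

Definition bch_word x y n (t : bch_index n) : seq L :=
  flatten [seq nseq (t i).1 x ++ nseq (t i).2 y | i <- enum 'I_n].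

Definition bch_term x y n (t : bch_index n) : L :=
  bch_coef t *: nest br (bch_word x y t).

Definition bch_part (P : pred nat) x y : L :=
  \sum_(1 <= n < s.+1)
    \sum_(t : bch_index n | bch_admissible t && P (bch_degree t)) bch_term x y t.

Lemma bchE x y : bch br s x y =
  \sum_(1 <= n < s.+1) \sum_(t : bch_index n | bch_admissible t) bch_term x y t.
Proof. by []. Qed.

Lemma size_bch_word x y n (t : bch_index n) :
  size (bch_word x y t) = bch_degree t.
Proof.
rewrite size_flatten /shape -map_comp sumnE big_map big_enum.
by apply: eq_bigr => i _; rewrite /= size_cat !size_nseq.
Qed.

Lemma bch_word_pred2 x y n (t : bch_index n) : all (pred2 x y) (bch_word x y t).
Proof.
apply/allP => u /flattenP[w /mapP[i _ ->]].
by rewrite mem_cat => /orP[] /nseqP[-> _] /=; rewrite eqxx ?orbT.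
Qed.

Lemma bch_degree_ge n (t : bch_index n) :
  bch_admissible t -> (n <= bch_degree t)%N.
Proof.
move=> /forallP adm; rewrite /bch_degree -[X in (X <= _)%N]card_ord -sum1_card.
by apply: leq_sum => i _; apply: adm.
Qed.

Lemma bch_partition x y : bch br s x y =
  bch_part (pred1 1%N) x y + bch_part (pred1 2%N) x y + bch_part (leq 3) x y.
Proof.
rewrite bchE -!big_split; apply: eq_big_nat => n /andP[n_gt0 _] /=.
rewrite (bigID (fun t => bch_degree t == 1%N)) -addrA; congr (_ + _).
rewrite (bigID (fun t => bch_degree t == 2%N)); congr (_ + _);
  apply: eq_bigl => t; rewrite -andbA; case adm: (bch_admissible t) => //=;
  by have := bch_degree_ge adm; case: (bch_degree t) => [|[|[|d]]] //; lia.
Qed.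

Lemma bch_inner_eq0 n d x y : (d < n)%N ->
  \sum_(t : bch_index n | bch_admissible t && (bch_degree t == d)) bch_term x y t
  = 0.
Proof.
move=> lt_dn; apply: big1 => t /andP[/bch_degree_ge le_n /eqP deg_d].
by move: lt_dn; rewrite -deg_d ltnNge le_n.
Qed.

Definition bch_single (a b : 'I_s.+1) : bch_index 1 := [ffun=> (a, b)].

Lemma bch_singleE (t : bch_index 1) : t = bch_single (t ord0).1 (t ord0).2.
Proof. by apply/ffunP => i; rewrite ffunE (ord1 i); case: (t ord0). Qed.

Lemma bch_single_eq a b a' b' :
  (bch_single a b == bch_single a' b') = (a == a') && (b == b').
Proof.
apply/eqP/andP => [/ffunP/(_ ord0)|[/eqP-> /eqP->]] //.
by rewrite !ffunE => -[-> ->].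
Qed.

Lemma bch_admissible_single a b :
  bch_admissible (bch_single a b) = (0 < a + b)%N.
Proof. by apply/forallP/idP => [/(_ ord0)|ab i]; rewrite ffunE. Qed.

Lemma bch_degree_single a b : bch_degree (bch_single a b) = (a + b)%N.
Proof. by rewrite /bch_degree big_ord1 ffunE. Qed.

Lemma bch_term_single x y a b : bch_term x y (bch_single a b) =
  ((a + b)%N%:R * (a`! * b`!)%N%:R)^-1 *: nest br (nseq a x ++ nseq b y).
Proof.
rewrite /bch_term /bch_coef /bch_word bch_degree_single big_ord1 ffunE.
by rewrite expr0 divr1 mul1r enum_ordSl enum_ord0 /= ffunE cats0.
Qed.

Definition bch_reindex n (h : 'I_n -> 'I_n) (t : bch_index n) : bch_index n :=
  [ffun i => t (h i)].

Section Reindex.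
Variables (n : nat) (h : 'I_n -> 'I_n).
Hypothesis h_inj : injective h.

Lemma bch_admissible_reindex t :
  bch_admissible (bch_reindex h t) = bch_admissible t.
Proof.
apply/forallP/forallP => adm i; rewrite ?ffunE //.
by rewrite -(f_invF h_inj i); have := adm (invF h_inj i); rewrite ffunE.
Qed.

Lemma bch_degree_reindex t : bch_degree (bch_reindex h t) = bch_degree t.
Proof.
rewrite /bch_degree [RHS](reindex_inj h_inj).
by apply: eq_bigr => i _; rewrite ffunE.
Qed.

Lemma bch_coef_reindex t : bch_coef (bch_reindex h t) = bch_coef t.
Proof.
rewrite /bch_coef bch_degree_reindex; congr (_ / (_ * _%:R)).
by rewrite [RHS](reindex_inj h_inj); apply: eq_bigr => i _; rewrite ffunE.
Qed.

End Reindex.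

Lemma bch_reindexK n (h : 'I_n -> 'I_n) :
  involutive h -> involutive (bch_reindex h).
Proof. by move=> hK t; apply/ffunP => i; rewrite !ffunE hK. Qed.

Lemma bch_word2 x y (t : bch_index 2) : bch_word x y t =
  (nseq (t ord0).1 x ++ nseq (t ord0).2 y)
    ++ (nseq (t ord_max).1 x ++ nseq (t ord_max).2 y).
Proof.
rewrite /bch_word enum_ordSl enum_ordSl enum_ord0 /= cats0.
by have -> : lift ord0 (@ord0 0) = ord_max by apply: val_inj.
Qed.

Lemma nseq_cat_size1 (T : Type) (x y : T) a b :
  (a + b = 1)%N -> exists u, nseq a x ++ nseq b y = [:: u].
Proof. by case: a b => [|[|a]] [|[|b]] //= _; eexists. Qed.

(* For such t both blocks are single letters, so swapping them reverses a
   bracket of length 2. *)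
Lemma bch_term_rev2 x y (t : bch_index 2) :
  bch_admissible t -> bch_degree t = 2%N ->
  bch_term x y (bch_reindex (@rev_ord 2) t) = - bch_term x y t.
Proof.
move=> /forallP adm deg2.
rewrite /bch_term (bch_coef_reindex (@rev_ord_inj 2)).
rewrite -scalerN; congr (_ *: _).
have rev0 : @rev_ord 2 ord0 = ord_max by apply: val_inj.
have revmax : @rev_ord 2 ord_max = ord0 by apply: val_inj.
have := size_bch_word x y t; rewrite !bch_word2 !ffunE rev0 revmax deg2.
rewrite !size_cat !size_nseq => size2.
have [u0 ->] : exists u, nseq (t ord0).1 x ++ nseq (t ord0).2 y = [:: u].
  by apply: nseq_cat_size1; have := adm ord0; have := adm ord_max; lia.
have [u1 ->] : exists u, nseq (t ord_max).1 x ++ nseq (t ord_max).2 y = [:: u].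
  by apply: nseq_cat_size1; have := adm ord0; have := adm ord_max; lia.
exact: br_anticomm.
Qed.

Lemma bch_inner2_eq0 x y :
  \sum_(t : bch_index 2 | bch_admissible t && (bch_degree t == 2%N))
    bch_term x y t = 0.
Proof.
set S := (X in X = 0); have rev_invol := bch_reindexK (@rev_ordK 2).
have S_opp : - S = S.
  rewrite /S -sumrN [RHS](reindex_inj (inv_inj rev_invol)) /=.
  apply: eq_big => [t|t /andP[adm /eqP deg2]]; last by rewrite bch_term_rev2.
  have -> := bch_admissible_reindex (@rev_ord_inj 2) t.
  by have -> := bch_degree_reindex (@rev_ord_inj 2) t.
have : (2%:R : R) *: S = 0 by rewrite scaler_nat mulr2n -{1}S_opp addNr.
by move/eqP; rewrite scaler_eq0 pnatr_eq0 /= => /eqP.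
Qed.

Section LowDegree.
Hypothesis s_gt0 : (0 < s)%N.
Let one : 'I_s.+1 := Ordinal (s_gt0 : (1 < s.+1)%N).

Lemma bch_part1 x y : bch_part (pred1 1%N) x y = x + y.
Proof.
rewrite /bch_part big_ltn // [X in _ + X]big_nat.
rewrite [X in _ + X]big1 ?addr0; last first.
  by move=> n /andP[n_gt1 _]; apply: bch_inner_eq0.
rewrite (bigD1 (bch_single one ord0)) /=; last first.
  by rewrite bch_admissible_single bch_degree_single.
rewrite (bigD1 (bch_single ord0 one)) /=; last first.
  by rewrite bch_admissible_single bch_degree_single bch_single_eq.
rewrite big1 ?addr0; last first.
  move=> t /andP[/andP[/andP[_ deg1] ne10] ne01]; move: deg1 ne10 ne01.
  rewrite [t]bch_singleE bch_degree_single !bch_single_eq.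
  by case: (t ord0) => -[[|[|a]] ?] [[|[|b]] ?].
rewrite !bch_term_single /= factS fact0 addn0 add0n !muln1.
by rewrite mulr1 invr1 !scale1r.
Qed.

Lemma bch_part2 x y : bch_part (pred1 2%N) x y = 2^-1 *: br x y.
Proof.
rewrite /bch_part big_ltn // [X in _ + X]big_nat.
rewrite [X in _ + X]big1 ?addr0; last first.
  move=> n /andP[n_gt1 _]; have [->|n_ne2] := eqVneq n 2.
    exact: bch_inner2_eq0.
  by apply: bch_inner_eq0; move/eqP: n_ne2; lia.
rewrite (bigD1 (bch_single one one)) /=; last first.
  by rewrite bch_admissible_single bch_degree_single.
rewrite big1 ?addr0; last first.
  move=> t /andP[/andP[_ deg2] ne11]; move: deg2 ne11.
  rewrite [t]bch_singleE bch_degree_single bch_single_eq bch_term_single.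
  case: (t ord0) => -[[|[|[|a]]] ?] [[|[|[|b]]] ?] //= _ _;
    by rewrite brxx scaler0.
by rewrite bch_term_single /= factS fact0 addn1 muln1 mulr1.
Qed.

Lemma bch_expansion x y :
  bch br s x y = x + y + 2^-1 *: br x y + bch_part (leq 3) x y.
Proof. by rewrite bch_partition bch_part1 bch_part2. Qed.

Lemma bch_sub_swap x y : bch br s x y - bch br s y x =
  br x y + (bch_part (leq 3) x y - bch_part (leq 3) y x).
Proof.
have half : (2^-1 + 2^-1 : R) = 1.
  by rewrite -div1r -mulrDl -mulr2n divff // pnatr_eq0.
rewrite !bch_expansion (br_anticomm x y) scalerN (addrC y x).
move: (x + y) => u; rewrite !opprD opprK addrACA [X in X + _]addrACA subrr add0r.
by rewrite -scalerDl half scale1r.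
Qed.

End LowDegree.

Lemma bch_tail_eq0 x y : br x y = 0 -> bch_part (leq 3) x y = 0.
Proof.
move=> xy0; apply: big1 => n _; apply: big1 => t /andP[_ deg_ge3].
rewrite /bch_term (nest_pred2_eq0 xy0) ?scaler0 ?bch_word_pred2 //.
by rewrite size_bch_word ltnW.
Qed.

Lemma bch_tail_lower_central k x y :
  lower_central k (br x y) -> lower_central k.+1 (bch_part (leq 3) x y).
Proof.
move=> lc_xy; apply: lower_central_sum => n _; apply: lower_central_sum.
move=> t /andP[_ deg_ge3]; apply: lower_central_scale.
have size_ge2 : (2 <= size (bch_word x y t))%N by rewrite size_bch_word ltnW.
apply: lower_central_le (nest_pred2_lower_central lc_xy _ size_ge2) => //.
  by rewrite size_bch_word; lia.
exact: bch_word_pred2.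
Qed.

End BCHExpansion.

Section Nilpotent.
Variable s : nat.
Hypothesis br_nil : nilpotent_step br s.

Lemma lower_central_foldr_eq0 k v p :
  lower_central k v -> (size p + k = s)%N -> foldr br v p = 0.
Proof.
move=> lc_v; elim: lc_v p => {k v}
  [v|k a v _ IH|k|k u v _ IHu _ IHv|k a v _ IH] p size_p.
- by rewrite -nest_rcons; apply: br_nil; rewrite size_rcons -size_p addn0.
- by rewrite -foldr_rcons; apply: IH; rewrite size_rcons addSnnS.
- exact: foldr_br0.
- by rewrite foldr_brD IHu // IHv // addr0.
- by rewrite foldr_brZ IH // scaler0.
Qed.

Lemma lower_central_nil v : lower_central s v -> v = 0.
Proof. by move=> lc_v; apply: (lower_central_foldr_eq0 (p := [::]) lc_v). Qed.

Lemma nilpotent_step0_eq0 (v : L) : s = 0%N -> v = 0.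
Proof. by move=> s0; apply: (br_nil (w := [:: v])); rewrite s0. Qed.

Lemma bch_commuting x y : br x y = 0 -> bch br s x y = x + y.
Proof.
move=> xy0; have [s0|s_gt0] := posnP s.
  rewrite (nilpotent_step0_eq0 (bch br s x y) s0).
  by rewrite (nilpotent_step0_eq0 (x + y) s0).
by rewrite bch_expansion // xy0 scaler0 addr0 bch_tail_eq0 ?addr0.
Qed.

Lemma lie_center_bch_comm c :
  (forall y, bch br s c y = bch br s y c) -> lie_center br c.
Proof.
move=> c_comm y; have [s0|s_gt0] := posnP s; first exact: nilpotent_step0_eq0.
apply: lower_central_nil; elim: (s) => [|k lc_cy]; first exact: lower_central0.
have := bch_sub_swap s_gt0 c y; rewrite c_comm subrr => /esym/eqP.
rewrite addr_eq0 => /eqP->; rewrite opprB.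
apply: lower_central_add.
  exact: bch_tail_lower_central (lower_central_br_anticomm lc_cy).
by rewrite -scaleN1r; apply/lower_central_scale/bch_tail_lower_central.
Qed.

End Nilpotent.

End LieAlgebra.

Section ExpCenter.
Variables (R : realType) (L : vectType R) (br : L -> L -> L) (s : nat).
Hypotheses (br_lie : is_lie_bracket br) (br_nil : nilpotent_step br s).
Variables (N : Type) (mul : N -> N -> N) (exp : L -> N) (log : N -> L).
Hypotheses (expK : cancel exp log) (logK : cancel log exp).
Hypothesis exp_bch : forall x y, mul (exp x) (exp y) = exp (bch br s x y).

Lemma exp_add_lie_center x c :
  lie_center br c -> exp (x + c) = mul (exp x) (exp c).
Proof.
move=> c_center; rewrite exp_bch bch_commuting //.
by rewrite (br_anticomm br_lie) c_center oppr0.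
Qed.

Lemma group_center_exp c : group_center mul (exp c) <-> lie_center br c.
Proof.
split=> [c_center|c_center h].
  apply: (lie_center_bch_comm br_lie br_nil) => y.
  by apply: (can_inj expK); rewrite -!exp_bch.
rewrite -(logK h) -(exp_add_lie_center _ c_center).
by rewrite exp_bch bch_commuting // addrC.
Qed.

End ExpCenter.

Theorem proposition2p4
  (R : realType) (L : vectType R) (br : L -> L -> L) (s : nat)
  (Hlie : is_lie_bracket br) (Hnil : nilpotent_step br s)
  (N : Type) (mul : N -> N -> N) (one : N) (inv : N -> N)
  (HN : is_group mul one inv)
  (exp : L -> N) (log : N -> L)
  (Hexplog : cancel exp log) (Hlogexp : cancel log exp)
  (Hbch : forall x y : L, mul (exp x) (exp y) = exp (bch br s x y))
  (F : N -> N) (HF : is_group_automorphism mul F) :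
  let f := fun x : L => log (F (exp x)) in
  (forall g : N, group_center mul (mul (inv g) (F g))) <->
  (forall x : L, lie_center br (f x - x)).
Proof.
move=> f; have [mulA mul1g _ mulVg mulgV] := HN.
have exp_add := exp_add_lie_center Hlie Hnil Hbch.
have center_exp := group_center_exp Hlie Hnil Hexplog Hlogexp Hbch.
split=> [F_central x | f_central g].
  set c := log (mul (inv (exp x)) (F (exp x))).
  have c_center : lie_center br c by apply/center_exp; rewrite /c Hlogexp.
  suff -> : f x = x + c by rewrite addrC addKr.
  apply: (can_inj Hexplog).
  by rewrite /f Hlogexp exp_add // /c Hlogexp mulA mulgV mul1g.
have F_g : F g = mul g (exp (f (log g) - log g)).
  by rewrite -{2}(Hlogexp g) -exp_add // addrC subrK /f Hlogexp Hlogexp.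
by rewrite F_g mulA mulVg mul1g; apply/center_exp.
Qed.
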